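(* Let $\{S_0,S_1,\dots,S_m\}$ be an admissible cover of $S$ and $\ell\in\{0,1,\dots,m\}$. If $\mathbf r,\mathbf s\in\mathbb V_{\mathbb F}\big(\bigcup_{i=0}^{\ell-1}S_i\big)$, then for every $c_\alpha(\mathbf a)\in\bigcup_{i=0}^{\ell}S_i$ we have $L_{\mathbf a=\mathbf r}(c_\alpha)=L_{\mathbf a=\mathbf s}(c_\alpha)$ as polynomials in $\mathbf a$; in particular $c_\alpha(\mathbf r)=L_{\mathbf a=\mathbf s}(c_\alpha)(\mathbf r)$.
   Context: Let $\mathbb F$ be a field of characteristic zero, $\mathbf x=(x_1,\dots,x_n)$ variables and $\mathbf a=(a_1,\dots,a_n)$ new indeterminates. For $p,q\in\mathbb F[\mathbf x]$ write $p(\mathbf x+\mathbf a)-q(\mathbf x)=\sum_{\alpha\in\mathbb N^n}c_\alpha(\mathbf a)\mathbf x^\alpha$ with $c_\alpha(\mathbf a)\in\mathbb F[\mathbf a]$, and let $S$ be the family of nonzero coefficients $c_\alpha(\mathbf a)$ (indexed by $\alpha$). On $\mathbb N^n$, $\beta\ge\alpha$ means componentwise $\ge$, and $\beta>\alpha$ means $\beta\ge\alpha$, $\beta\ne\alpha$. A cover of $S$ is a collection $\{S_0,\dots,S_m\}$ of subsets whose union is $S$; it is admissible if (1) every polynomial in $S_0$ has total degree at most one in $\mathbf a$; and (2) for every $\ell=1,\dots,m$, if $c_\alpha\in S_\ell$ then $c_\beta\in\bigcup_{i=0}^{\ell-1}S_i$ for all $\beta>\alpha$ with $c_\beta\neq0$.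 For $f\in\mathbb F[\mathbf a]$ with homogeneous decomposition $f=\sum_{i\ge0}H^i(f)$ in $\mathbf a$ and $\mathbf s\in\mathbb F^n$, the linearization is $L_{\mathbf a=\mathbf s}(f)=H^0(f)+H^1(f)(\mathbf a)+\sum_{i\ge2}H^i(f)(\mathbf s)$. For $P\subseteq\mathbb F[\mathbf a]$, $\mathbb V_{\mathbb F}(P)$ is the set of common zeros of $P$ in $\mathbb F^n$ ($\mathbb V_{\mathbb F}(\varnothing)=\mathbb F^n$). *)

From HB Require Import structures.
From mathcomp Require Import all_boot all_order all_algebra.
From mathcomp Require Import mpoly.
Set Implicit Arguments. Unset Strict Implicit. Unset Printing Implicit Defensive.
Import Order.TTheory GRing.Theory.
Local Open Scope ring_scope.

Section Defs.
Variables (F : fieldType) (n : nat).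

(* Inner ring {mpoly F[n]} : polynomials in the indeterminates a_1..a_n.
   Outer ring {mpoly {mpoly F[n]}[n]} : polynomials in x_1..x_n with
   coefficients in F[a]. *)
Definition liftC (p : {mpoly F[n]}) : {mpoly {mpoly F[n]}[n]} :=
  map_mpoly (fun c : F => c%:MP_[n]) p.

(* p(x + a) - q(x), as a polynomial in x with coefficients in F[a]. *)
Definition shift_diff (p q : {mpoly F[n]}) : {mpoly {mpoly F[n]}[n]} :=
  comp_mpoly [tuple ('X_i + ('X_i : {mpoly F[n]})%:MP_[n]) | i < n] (liftC p)
  - liftC q.

Definition coefc (p q : {mpoly F[n]}) (alpha : 'X_{1..n}) : {mpoly F[n]} :=
  (shift_diff p q)@_alpha.

Definition Hcomp (i : nat) (f : {mpoly F[n]}) : {mpoly F[n]} :=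
  pihomog mdeg i f.

Definition linearize (s : 'I_n -> F) (f : {mpoly F[n]}) : {mpoly F[n]} :=
  \sum_(i < msize f)
     (if (i <= 1)%N then Hcomp i f else ((Hcomp i f).@[s])%:MP_[n]).

Definition tdeg_le1 (f : {mpoly F[n]}) : Prop :=
  forall mo, mo \in msupp f -> (mdeg mo <= 1)%N.

(* Sc 0, ..., Sc m are subsets of S (S indexed by alpha, c_alpha <> 0)
   whose union is S. *)
Definition is_cover (p q : {mpoly F[n]}) (m : nat)
    (Sc : nat -> 'X_{1..n} -> Prop) : Prop :=
  (forall i alpha, (i <= m)%N -> Sc i alpha -> coefc p q alpha != 0) /\
  (forall alpha, coefc p q alpha != 0 -> exists2 i, (i <= m)%N & Sc i alpha).

Definition admissible (p q : {mpoly F[n]}) (m : nat)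
    (Sc : nat -> 'X_{1..n} -> Prop) : Prop :=
  is_cover p q m Sc /\
  (forall alpha, Sc 0%N alpha -> tdeg_le1 (coefc p q alpha)) /\
  (forall l, (1 <= l <= m)%N -> forall alpha, Sc l alpha ->
     forall beta, ltm alpha beta -> coefc p q beta != 0 ->
       exists2 i, (i < l)%N & Sc i beta).

Definition in_variety (p q : {mpoly F[n]}) (Sc : nat -> 'X_{1..n} -> Prop)
    (l : nat) (r : 'I_n -> F) : Prop :=
  forall i alpha, (i < l)%N -> Sc i alpha -> (coefc p q alpha).@[r] = 0.

End Defs.

(* Write D_a(x) = p(x + a) - q(x), so that c_alpha(a) is the alpha-coefficient of D_a.
   If every c_beta with beta > alpha takes the same value at r and at s, then D_r - D_s
   has no monomial strictly above alpha, and such a polynomial keeps its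
   alpha-coefficient under any translation x -> x + b.  Hence
   c_alpha(r + b) - c_alpha(s + b) = c_alpha(r) - c_alpha(s) for every b, which
   iterates to c_alpha(j s) = c_alpha(j r) + j (c_alpha(s) - c_alpha(r)) for all
   j in N.  Expanding both sides in homogeneous components gives a polynomial
   identity in j that is at most linear; in characteristic zero this forces
   H^d(c_alpha)(r) = H^d(c_alpha)(s) for all d >= 2, which is exactly
   L_{a=r}(c_alpha) = L_{a=s}(c_alpha).  Admissibility supplies the hypothesis:
   the c_beta above an element of S_l lie in S_0, ..., S_(l-1), where r and s are
   zeros; for S_0 the higher components vanish outright. *)
From HB Require Import structures.
From mathcomp Require Import all_boot all_order all_algebra.
From mathcomp Require Import mpoly.
From mathcomp Require Import ring zify.
Import GRing.Theory.
Local Open Scope ring_scope.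

Section TranslationCoefficients.
Variables (R : comNzRingType) (n : nat).
Implicit Types (P Q : {mpoly R[n]}) (m g : 'X_{1..n}).

Definition shift_tuple (b : 'I_n -> R) : n.-tuple {mpoly R[n]} :=
  [tuple 'X_i + (b i)%:MP | i < n].

(* [P] is ['X_[m]] plus monomials strictly below [m]; strictness is expressed
   through the degree, which makes closure under products a matter of arithmetic. *)
Definition topX P m :=
  forall g, g \in msupp (P - 'X_[m]) -> lem g m && (mdeg g < mdeg m)%N.

Lemma lepm_add m1 m2 g1 g2 : lem g1 m1 -> lem g2 m2 -> lem (g1 + g2)%MM (m1 + m2)%MM.
Proof.
move=> /mnm_lepP h1 /mnm_lepP h2; apply/mnm_lepP=> i.
by rewrite !mnmDE leq_add.
Qed.

Lemma msuppM_split g P Q : g \in msupp (P * Q) ->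
  exists g1 g2, [/\ g1 \in msupp P, g2 \in msupp Q & g = (g1 + g2)%MM].
Proof. by move/msuppM_le/allpairsP=> [[g1 g2] /= [h1 h2 ->]]; exists g1, g2. Qed.

Lemma topX1 : topX 1 0%MM.
Proof. by move=> g; rewrite mpolyX0 subrr msupp0. Qed.

Lemma topXM P Q m1 m2 : topX P m1 -> topX Q m2 -> topX (P * Q) (m1 + m2)%MM.
Proof.
move=> hP hQ g.
have -> : P * Q - 'X_[m1 + m2] = (P - 'X_[m1]) * (Q - 'X_[m2]) +
    ((P - 'X_[m1]) * 'X_[m2] + 'X_[m1] * (Q - 'X_[m2])).
  by rewrite mpolyXD; ring.
move/msuppD_le; rewrite mem_cat => /orP [|/msuppD_le]; last rewrite mem_cat => /orP [].
- move/msuppM_split => [g1 [g2 [/hP /andP[a1 b1] /hQ /andP[a2 b2] ->]]].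
  rewrite lepm_add //= !mdegD; lia.
- move/msuppM_split => [g1 [g2 [/hP /andP[a1 b1]]]].
  rewrite msuppX inE => /eqP -> ->.
  rewrite lepm_add ?lepm_refl //= !mdegD; lia.
- move/msuppM_split => [g1 [g2 []]].
  rewrite msuppX inE => /eqP -> /hQ /andP[a2 b2] ->.
  rewrite lepm_add ?lepm_refl //= !mdegD; lia.
Qed.

Lemma topXXC (i : 'I_n) (c : R) : topX ('X_i + c%:MP) U_(i)%MM.
Proof.
move=> g; rewrite addrAC subrr add0r msuppC; case: eqP => // _.
rewrite inE => /eqP ->; rewrite mdeg0 mdeg1 andbT.
by apply/mnm_lepP=> j; rewrite mnm0E.
Qed.

Lemma topXXn P m k : topX P m -> topX (P ^+ k) (m *+ k)%MM.
Proof.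
move=> h; elim: k => [|k ih]; first by rewrite expr0 mulm0n; exact: topX1.
by rewrite exprS mulmS; apply: topXM.
Qed.

Lemma topX_shift (b : 'I_n -> R) m : topX ('X_[m] \mPo shift_tuple b) m.
Proof.
rewrite comp_mpolyX {2}[m]multinomUE_id.
elim/big_rec2: _ => [|i y1 y2 _ h]; first exact: topX1.
by rewrite tnth_mktuple; apply: topXM => //; apply/topXXn/topXXC.
Qed.

Lemma mcoeff_topX P m g : topX P m ->
  P@_g = if g == m then 1 else if lem g m then P@_g else 0.
Proof.
move=> h; have E : P = (P - 'X_[m]) + 'X_[m] by rewrite subrK.
case: eqP => [->|ne].
  rewrite E mcoeffD mcoeffX eqxx.
  case: (boolP (m \in msupp (P - 'X_[m]))) => [/h|/memN_msupp_eq0 ->].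
    by rewrite ltnn andbF.
  by rewrite add0r.
case: ifP => // nl.
rewrite E mcoeffD mcoeffX.
have -> : (m == g) = false by apply/negbTE/eqP=> e; apply: ne.
case: (boolP (g \in msupp (P - 'X_[m]))) => [/h|/memN_msupp_eq0 ->].
  by rewrite nl.
by rewrite addr0.
Qed.

Lemma mcoeff_comp_shift P (b : 'I_n -> R) (al : 'X_{1..n}) :
  (forall g, ltm al g -> P@_g = 0) -> (P \mPo shift_tuple b)@_al = P@_al.
Proof.
move=> hP; rewrite [in RHS](mpolyE P) comp_mpolyEX !raddf_sum /=.
apply: eq_big_seq => m _; rewrite !mcoeffZ mcoeffX.
rewrite (mcoeff_topX _ _ al (topX_shift b m)).
case: (eqVneq al m) => [_|ne]; first by rewrite mulr1.
case: ifP => // lam.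
by rewrite hP ?mul0r // /ltm ne lam.
Qed.

Lemma comp_mpolyA P (l1 l2 : n.-tuple {mpoly R[n]}) :
  (P \mPo l1) \mPo l2 = P \mPo [tuple (tnth l1 i) \mPo l2 | i < n].
Proof.
rewrite [P \mPo l1]comp_mpolyEX [P \mPo _]comp_mpolyEX raddf_sum.
apply: eq_bigr => m _.
rewrite -[LHS]/((P@_m *: ('X_[m] \mPo l1)) \mPo l2) comp_mpolyZ; congr (_ *: _).
rewrite !comp_mpolyX (rmorph_prod (comp_mpoly l2)); apply: eq_bigr => i _.
by rewrite (rmorphXn (comp_mpoly l2)) tnth_mktuple.
Qed.

Lemma comp_shift_tupleD P (x y : 'I_n -> R) :
  (P \mPo shift_tuple x) \mPo shift_tuple y = P \mPo shift_tuple (fun i => x i + y i).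
Proof.
rewrite comp_mpolyA; congr (_ \mPo _); apply: eq_mktuple => i.
rewrite tnth_mktuple comp_mpolyD comp_mpolyC comp_mpolyXU.
by rewrite nth_mktuple mpolyCD; ring.
Qed.

End TranslationCoefficients.
Arguments shift_tuple {R n} b.

Lemma map_mpoly_comp_rmorph (K S : comNzRingType) (n k : nat) (f : {rmorphism K -> S})
    (P : {mpoly K[n]}) (lq : n.-tuple {mpoly K[k]}) :
  map_mpoly f (P \mPo lq) = map_mpoly f P \mPo [tuple map_mpoly f (tnth lq i) | i < n].
Proof.
have -> : map_mpoly f P = \sum_(m <- msupp P) f P@_m *: 'X_[m].
  rewrite {1}[P]mpolyE raddf_sum; apply: eq_bigr => m _ /=.
  by rewrite map_mpolyZ map_mpolyX.
rewrite comp_mpolyEX raddf_sum [in RHS]raddf_sum.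
apply: eq_bigr => m _.
rewrite -[LHS]/(map_mpoly f (P@_m *: ('X_[m] \mPo lq))).
rewrite -[RHS]/((f P@_m *: 'X_[m]) \mPo [tuple map_mpoly f (tnth lq i) | i < n]).
rewrite map_mpolyZ comp_mpolyZ !comp_mpolyX rmorph_prod; congr (_ *: _).
by apply: eq_bigr => i _; rewrite rmorphXn tnth_mktuple.
Qed.

Section CoefficientsAtAPoint.
Variables (F : fieldType) (n : nat) (p q : {mpoly F[n]}).

Lemma map_meval_liftC (a : 'I_n -> F) (P : {mpoly F[n]}) :
  map_mpoly (meval a) (liftC P) = P.
Proof. by apply/mpolyP => m; rewrite !mcoeff_map_mpoly /= mevalC. Qed.

Lemma meval_coefc (a : 'I_n -> F) g :
  (coefc p q g).@[a] = (p \mPo shift_tuple a - q)@_g.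
Proof.
rewrite /coefc -(@mcoeff_map_mpoly _ _ _ (meval a)); congr (_@__).
rewrite /shift_diff raddfB.
rewrite -[X in X - _ = _]/(map_mpoly (meval a) (liftC p \mPo
  [tuple ('X_i + ('X_i : {mpoly F[n]})%:MP_[n]) | i < n])).
rewrite map_mpoly_comp_rmorph map_meval_liftC.
congr (_ \mPo _ - _); last exact: map_meval_liftC.
apply: eq_from_tnth => i; rewrite !tnth_mktuple.
apply/mpolyP => m; rewrite mcoeff_map_mpoly !mcoeffD mcoeffX !mcoeffC.
rewrite -[LHS]/(meval a ((U_(i)%MM == m)%:R + 'X_i * (m == 0%MM)%:R)).
by rewrite mevalD mevalM mevalXU !mcoeffX !rmorph_nat.
Qed.

Variables (al : 'X_{1..n}) (r s : 'I_n -> F).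
Hypothesis upper_agree :
  forall g, ltm al g -> (coefc p q g).@[r] = (coefc p q g).@[s].

Local Notation f := (coefc p q al).

Lemma coefc_translate_diff (b : 'I_n -> F) :
  f.@[fun i => r i + b i] - f.@[fun i => s i + b i] = f.@[r] - f.@[s].
Proof.
rewrite !meval_coefc -!mcoeffB.
have -> : (p \mPo shift_tuple (fun i => r i + b i) - q) -
          (p \mPo shift_tuple (fun i => s i + b i) - q) =
          ((p \mPo shift_tuple r - q) - (p \mPo shift_tuple s - q)) \mPo shift_tuple b.
  by rewrite !comp_mpolyB !comp_shift_tupleD; ring.
apply: mcoeff_comp_shift => g lg.
by rewrite mcoeffB -!meval_coefc upper_agree // subrr.
Qed.

Lemma coefc_translate (x : 'I_n -> F) :
  f.@[fun i => x i + (s i - r i)] = f.@[x] + (f.@[s] - f.@[r]).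
Proof.
have := coefc_translate_diff (fun i => x i - r i).
rewrite (@meval_eq _ _ (fun i => r i + (x i - r i)) x); last by move=> i; ring.
rewrite (@meval_eq _ _ (fun i => s i + (x i - r i)) (fun i => x i + (s i - r i)));
  last by move=> i; ring.
by move=> e; rewrite -opprB -e; ring.
Qed.

Lemma coefc_translate_natr (j : nat) (x : 'I_n -> F) :
  f.@[fun i => x i + j%:R * (s i - r i)] = f.@[x] + j%:R * (f.@[s] - f.@[r]).
Proof.
elim: j x => [|j ih] x.
  by rewrite (@meval_eq _ _ _ x) ?mul0r ?addr0 // => i; rewrite mul0r addr0.
rewrite (@meval_eq _ _ _ (fun i => (fun i => x i + j%:R * (s i - r i)) i + (s i - r i))).
  by rewrite coefc_translate ih -natr1; ring.
by move=> i /=; rewrite -natr1; ring.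
Qed.

Lemma coefc_scale_natr (j : nat) :
  f.@[fun i => j%:R * s i] = f.@[fun i => j%:R * r i] + j%:R * (f.@[s] - f.@[r]).
Proof. by rewrite -coefc_translate_natr; apply: meval_eq => i /=; ring. Qed.

End CoefficientsAtAPoint.

Section HomogeneousComponents.
Variables (F : fieldType) (n : nat).
Implicit Types (f h : {mpoly F[n]}) (a : 'I_n -> F).

Lemma meval_dhomog_scale (d : nat) h (mu : F) a :
  h \is d.-homog -> h.@[fun i => mu * a i] = mu ^+ d * h.@[a].
Proof.
move=> hh; rewrite !mevalE mulr_sumr; apply: eq_big_seq => m hm.
rewrite mulrCA; congr (_ * _).
rewrite (eq_bigr (fun i => mu ^+ m i * a i ^+ m i)); last by move=> i _; rewrite exprMn.
by rewrite big_split /= prodrXr -mdegE (dhomog_mf hh hm).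
Qed.

Lemma meval_scale_Hcomp f (mu : F) a :
  f.@[fun i => mu * a i] = \sum_(d < msize f) mu ^+ d * (Hcomp d f).@[a].
Proof.
rewrite {1}(pihomog_partitionE (leqnn (msize f))) raddf_sum /=.
by apply: eq_bigr => d _; apply/meval_dhomog_scale/pihomogP.
Qed.

Lemma pchar0_natr_inj : [pchar F] =i pred0 -> injective (fun i : nat => (i%:R : F)).
Proof.
move=> /pcharf0P h0 i j /= e.
wlog le_ij : i j e / (i <= j)%N.
  by move=> w; case: (leqP i j) => [|/ltnW] l; [exact: w | exact/esym/w].
have : ((j - i)%N%:R : F) == 0 by rewrite natrB // e subrr.
by rewrite h0 subn_eq0 => le_ji; apply/eqP; rewrite eqn_leq le_ij le_ji.
Qed.

(* In characteristic zero the naturals give infinitely many roots of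
   [\sum_d c d 'X^d - K 'X]. *)
Lemma coef_eq0_of_linear_on_nat (N : nat) (c : nat -> F) (K : F) :
  [pchar F] =i pred0 ->
  (forall j : nat, \sum_(d < N) j%:R ^+ d * c d = j%:R * K) ->
  forall d, (2 <= d < N)%N -> c d = 0.
Proof.
move=> h0 hj d /andP[d2 dN].
pose P := \poly_(i < N) c i - K *: 'X.
have P0 : P = 0.
  apply: (@roots_geq_poly_eq0 _ P [seq i%:R | i <- iota 0 (size P)]).
  - apply/allP => x /mapP [j _ ->].
    rewrite /root /P hornerD hornerN hornerZ hornerX horner_poly.
    under eq_bigr do rewrite mulrC.
    by rewrite hj mulrC subrr.
  - by rewrite map_inj_uniq ?iota_uniq //; exact: pchar0_natr_inj.
  - by rewrite size_map size_iota.
have := congr1 (fun P : {poly F} => P`_d) P0.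
rewrite /P coefB coefZ coefX coef_poly dN coef0.
have -> : (d == 1)%N = false by case: d d2 {dN} => [|[]].
by rewrite mulr0 subr0.
Qed.

Lemma Hcomp_meval_eq f (r s : 'I_n -> F) (K : F) : [pchar F] =i pred0 ->
  (forall j : nat, f.@[fun i => j%:R * s i] = f.@[fun i => j%:R * r i] + j%:R * K) ->
  forall d, (2 <= d < msize f)%N -> (Hcomp d f).@[r] = (Hcomp d f).@[s].
Proof.
move=> h0 hj d hd; apply/esym/eqP; rewrite -subr_eq0; apply/eqP.
apply: (@coef_eq0_of_linear_on_nat (msize f)
          (fun d => (Hcomp d f).@[s] - (Hcomp d f).@[r]) K h0) => // j.
under eq_bigr do rewrite mulrBr.
by rewrite sumrB -!meval_scale_Hcomp hj addrC addKr.
Qed.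

Lemma linearize_eq f (r s : 'I_n -> F) :
  (forall d, (2 <= d < msize f)%N -> (Hcomp d f).@[r] = (Hcomp d f).@[s]) ->
  linearize r f = linearize s f /\ f.@[r] = (linearize s f).@[r].
Proof.
move=> h.
have e : linearize r f = linearize s f.
  apply: eq_bigr => i _; case: ifP => // /negbT; rewrite -ltnNge => h2.
  by rewrite h // h2 ltn_ord.
split => //; rewrite -e /linearize raddf_sum /=.
rewrite {1}(pihomog_partitionE (leqnn (msize f))) raddf_sum /=.
by apply: eq_bigr => i _; case: ifP => // _; rewrite mevalC.
Qed.

Lemma Hcomp_tdeg_le1 f d : tdeg_le1 f -> (2 <= d)%N -> Hcomp d f = 0.
Proof.
move=> h hd; rewrite /Hcomp pihomogE big1_seq // => m /andP[/eqP md /h].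
by rewrite /= md => /(leq_trans hd).
Qed.

End HomogeneousComponents.

Theorem mainTheorem5 (F : fieldType) (n : nat) (p q : {mpoly F[n]})
    (m : nat) (Sc : nat -> 'X_{1..n} -> Prop) (l : nat) (r s : 'I_n -> F) :
  [pchar F] =i pred0 ->
  admissible p q m Sc ->
  (l <= m)%N ->
  in_variety p q Sc l r ->
  in_variety p q Sc l s ->
  forall alpha : 'X_{1..n}, (exists2 i, (i <= l)%N & Sc i alpha) ->
    linearize r (coefc p q alpha) = linearize s (coefc p q alpha) /\
    (coefc p q alpha).@[r] = (linearize s (coefc p q alpha)).@[r].
Proof.
move=> h0 [_ [hS0 hadm]] lm hr hs al [[|i] il hi]; apply: linearize_eq.
  by move=> d /andP[d2 _]; rewrite Hcomp_tdeg_le1 ?meval0 //; exact: hS0.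
have upper_agree g : ltm al g -> (coefc p q g).@[r] = (coefc p q g).@[s].
  move=> lg; have [->|nz] := eqVneq (coefc p q g) 0; first by rewrite !meval0.
  have [k ki hk] := hadm i.+1 (leq_trans il lm) al hi g lg nz.
  have kl : (k < l)%N by apply: leq_trans ki il.
  by rewrite (hr k g kl hk) (hs k g kl hk).
apply: (@Hcomp_meval_eq F n _ r s _ h0).
exact: (@coefc_scale_natr F n p q al r s upper_agree).
Qed.
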